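(* Let $\mathbb{P}: M_2 \to M_2$ be the linear map $$\mathbb{P}\begin{pmatrix} x_{11} & x_{12} \\ x_{21} & x_{22}\end{pmatrix} = \begin{pmatrix} \frac{x_{11}+x_{22}}{2} & x_{12} \\ x_{21} & \frac{x_{11}+x_{22}}{2}\end{pmatrix},$$ and define on operators on $\mathbb{C}^2\otimes\mathbb{C}^2\otimes\mathbb{C}^2$ $$\Phi_3(\varrho) = (\mathbb{P}\otimes\mathbb{I}\otimes\mathbb{I})(\varrho) + (\mathbb{I}\otimes\mathbb{P}\otimes\mathbb{I})(\varrho) + (\mathbb{I}\otimes\mathbb{I}\otimes\mathbb{P})(\varrho) + \tfrac12\,\mathrm{Tr}(\varrho)\, I,$$ with $\mathbb{I}$ the identity map on $M_2$ and $I$ the $8\times8$ identity. Let $|GHZ\rangle=\frac{1}{\sqrt2}(|000\rangle+|111\rangle)$ and $\mathcal{W}=\Phi_3(|GHZ\rangle\langle GHZ|)$. Then $\mathcal{W}$ is a genuine tripartite entanglement witness: $\mathrm{Tr}(\mathcal{W}\rho)\ge 0$ for every biseparable three-qubit state $\rho$, while for the genuinely entangled state $|\widetilde{GHZ}\rangle=\frac{1}{\sqrt2}(|000\rangle-|111\rangle)$ one has $\mathrm{Tr}(\mathcal{W}\,|\widetilde{GHZ}\rangle\langle\widetilde{GHZ}|)=-\frac14<0$.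
   Context: A three-qubit state $\rho$ is biseparable if it can be written as $\rho = p_1\,\rho_1\otimes\rho_{23} + p_2\,\rho_2\otimes\rho_{13} + p_3\,\rho_3\otimes\rho_{12}$ (each term across the indicated bipartition $1|23$, $2|13$, $3|12$), where $p_i\ge 0$, $\sum_i p_i=1$, and $\rho_i$, $\rho_{jk}$ are density matrices on the indicated qubits; a state that is not biseparable is genuinely (tripartite) entangled. $M_2$ is the space of complex $2\times 2$ matrices and $\{|0\rangle,|1\rangle\}$ the standard basis of $\mathbb{C}^2$. *)

From HB Require Import structures.
From mathcomp Require Import all_boot all_order all_algebra all_field.
Set Implicit Arguments. Unset Strict Implicit. Unset Printing Implicit Defensive.
Import Order.TTheory GRing.Theory Num.Theory.
Local Open Scope ring_scope.

Definition adj (m n : nat) (A : 'M[algC]_(m, n)) : 'M[algC]_(n, m) :=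
  \matrix_(i, j) (A j i)^*.

Definition density (n : nat) (A : 'M[algC]_n) : Prop :=
  adj A = A /\ (forall v : 'cV[algC]_n, 0 <= (adj v *m A *m v) 0 0) /\ \tr A = 1.

(* Three-qubit basis: index i : 'I_8 is |b0 b1 b2> with i = 4 b0 + 2 b1 + b2;
   qubits are numbered 0,1,2 (paper's 1,2,3). *)
Definition qubit (i : 'I_8) (k : 'I_3) : 'I_2 :=
  inord ((i %/ 2 ^ (2 - k)) %% 2).

Definition setq (i : 'I_8) (k : 'I_3) (a : 'I_2) : 'I_8 :=
  inord (i - qubit i k * 2 ^ (2 - k) + a * 2 ^ (2 - k)).

Definition rest (k : 'I_3) (i : 'I_8) : 'I_4 :=
  let q := fun m : nat => (nat_of_ord (qubit i (inord m))) in
  inord (match nat_of_ord k with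
         | 0 => 2 * q 1 + q 2
         | 1 => 2 * q 0 + q 2
         | _ => 2 * q 0 + q 1
         end).

(* rho_k (x) rho_rest across the bipartition k | (other two qubits) *)
Definition bip (k : 'I_3) (A : 'M[algC]_2) (B : 'M[algC]_4) : 'M[algC]_8 :=
  \matrix_(i, j) (A (qubit i k) (qubit j k) * B (rest k i) (rest k j)).

Definition biseparable (rho : 'M[algC]_8) : Prop :=
  exists (p : 'I_3 -> algC) (A : 'I_3 -> 'M[algC]_2) (B : 'I_3 -> 'M[algC]_4),
    (forall k, 0 <= p k) /\ \sum_k p k = 1 /\
    (forall k, density (A k)) /\ (forall k, density (B k)) /\
    rho = \sum_k p k *: bip k (A k) (B k).

Definition Pmap (X : 'M[algC]_2) : 'M[algC]_2 :=
  \matrix_(a, b) (if a == b then (X 0 0 + X 1 1) / 2 else X a b).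

Definition on_qubit (k : 'I_3) (L : 'M[algC]_2 -> 'M[algC]_2)
    (X : 'M[algC]_8) : 'M[algC]_8 :=
  \matrix_(i, j) L (\matrix_(a, b) X (setq i k a) (setq j k b)) (qubit i k) (qubit j k).

Definition Phi3 (X : 'M[algC]_8) : 'M[algC]_8 :=
  on_qubit 0 Pmap X + on_qubit 1 Pmap X + on_qubit 2 Pmap X + (\tr X / 2) *: 1%:M.

Definition ket (i : 'I_8) : 'cV[algC]_8 := \col_j (if j == i then 1 else 0).
Definition proj (v : 'cV[algC]_8) : 'M[algC]_8 := v *m adj v.

Definition GHZ : 'cV[algC]_8 := (sqrtC 2)^-1 *: (ket 0 + ket (inord 7)).
Definition GHZt : 'cV[algC]_8 := (sqrtC 2)^-1 *: (ket 0 - ket (inord 7)).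

Definition Wit : 'M[algC]_8 := Phi3 (proj GHZ).

(* Tr(W rho) only sees tr rho and the corner entries of rho at |000> and |111>:
   Tr(W rho) = 3/4 tr rho + 1/2 (rho_00 + rho_77) + 3/2 (rho_07 + rho_70).
   For a product rho = A (x) B across any cut these corners are a b, d e, c f
   and (c f)^*, where a, d, c = A_00, A_11, A_01 and b, e, f = B_00, B_33, B_03.
   Then a + d <= 1, b + e <= 1, and positivity of 2x2 principal minors gives
   |c|^2 <= a d, |f|^2 <= b e.  AM-GM bounds 2 |c f| by both a b + d e and
   a e + b d, whose sum (a + d) (b + e) is at most 1, so
   16 |c f| <= 3 + 2 (a b + d e) and Tr(W rho) >= 0; convexity extends this to
   biseparable states.  For GHZt the formula gives 3/4 + 1/2 - 3/2 = -1/4, so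
   GHZt cannot be biseparable. *)

From mathcomp Require Import all_boot all_order all_algebra all_field.
From mathcomp Require Import ring lra.
Set Implicit Arguments.
Unset Strict Implicit.
Unset Printing Implicit Defensive.
Import Order.TTheory GRing.Theory Num.Theory.
Local Open Scope ring_scope.

Lemma adjD m n (A B : 'M[algC]_(m, n)) : adj (A + B) = adj A + adj B.
Proof. by apply/matrixP => i j; rewrite !mxE rmorphD. Qed.

Lemma adjZ m n (a : algC) (A : 'M[algC]_(m, n)) : adj (a *: A) = a^* *: adj A.
Proof. by apply/matrixP => i j; rewrite !mxE rmorphM. Qed.

Lemma adj_delta m n (i : 'I_m) (j : 'I_n) : adj (delta_mx i j) = delta_mx j i.
Proof. by apply/matrixP => r s; rewrite !mxE conjC_nat andbC. Qed.

Lemma delta_mulmx_delta (R : pzRingType) n (M : 'M[R]_n) i j :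
  delta_mx (0 : 'I_1) i *m M *m delta_mx j (0 : 'I_1) = (M i j)%:M.
Proof. by rewrite -rowE -colE [LHS]mx11_scalar !mxE. Qed.

Lemma mxtrace_delta_mulmx (R : comPzRingType) n (M : 'M[R]_n) i j :
  \tr (delta_mx i j *m M) = M j i.
Proof.
rewrite -(mul_delta_mx (0 : 'I_1)) -mulmxA mxtrace_mulC.
by rewrite delta_mulmx_delta mxtrace_scalar.
Qed.

Lemma form_delta2 n (M : 'M[algC]_n) i j (a b : algC) :
  let v := a *: delta_mx i (0 : 'I_1) + b *: delta_mx j 0 in
  (adj v *m M *m v) 0 0 =
    a^* * M i i * a + a^* * M i j * b + b^* * M j i * a + b^* * M j j * b.
Proof.
rewrite /= adjD !adjZ !adj_delta !(mulmxDl, mulmxDr) -!(scalemxAl, scalemxAr).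
by rewrite !delta_mulmx_delta !mxE !eqxx !mulr1n; ring.
Qed.

Definition psd n (M : 'M[algC]_n) : Prop :=
  adj M = M /\ forall v : 'cV[algC]_n, 0 <= (adj v *m M *m v) 0 0.

Lemma density_psd n (M : 'M[algC]_n) : density M -> psd M.
Proof. by case=> herm [form _]. Qed.

Section PositiveSemidefinite.
Variables (n : nat) (M : 'M[algC]_n).
Hypothesis psdM : psd M.

Lemma psd_conj i j : M j i = (M i j)^*.
Proof. by case: psdM => herm _; rewrite -{1}herm mxE. Qed.

Lemma psd_diag_ge0 i : 0 <= M i i.
Proof.
case: psdM => _ /(_ (delta_mx i (0 : 'I_1))).
by rewrite adj_delta delta_mulmx_delta mxE eqxx mulr1n.
Qed.

Lemma psd_entry_bound i j : `|M i j| ^+ 2 <= M i i * M j j.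
Proof.
set a := M i i; set d := M j j; set c := M i j.
have a_ge0 : 0 <= a := psd_diag_ge0 i.
have d_ge0 : 0 <= d := psd_diag_ge0 j.
have form (s t : algC) :
    0 <= s^* * a * s + s^* * c * t + t^* * c^* * s + t^* * d * t.
  by case: psdM => _ /(_ (s *: delta_mx i (0 : 'I_1) + t *: delta_mx j 0));
     rewrite form_delta2 -psd_conj.
rewrite normCK -subr_ge0.
(* the forms at (c, -a) and (d, -c^* ) add up to (a + d) (a d - |c|^2) *)
move: (addr_ge0 a_ge0 d_ge0); rewrite le0r => /orP[| ad_gt0].
- rewrite paddr_eq0 // => /andP[/eqP a0 /eqP d0].
  have := form 1 (- c^*); rewrite a0 d0 !rmorphN /= conjCK conjC1.
  rewrite (_ : _ + _ = - (2 * (c * c^*))); last by ring.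
  by rewrite mul0r sub0r !oppr_ge0 pmulr_rle0.
- rewrite -(pmulr_rge0 _ ad_gt0).
  have := addr_ge0 (form c (- a)) (form d (- c^*)).
  rewrite !rmorphN /= conjCK (geC0_conj a_ge0) (geC0_conj d_ge0).
  by rewrite (_ : _ + _ = (a + d) * (a * d - c * c^*)) //; ring.
Qed.

Lemma psd_diag2_le_mxtrace i j : i != j -> M i i + M j j <= \tr M.
Proof.
move=> ij; rewrite /mxtrace (bigD1 i) //= (bigD1 j) 1?eq_sym //= addrA lerDl.
by apply: sumr_ge0 => l _; apply: psd_diag_ge0.
Qed.

End PositiveSemidefinite.

Lemma le_AGM2 (R : realFieldType) (x p q : R) :
  0 <= x -> 0 <= p -> 0 <= q -> x ^+ 2 <= p * q -> 2 * x <= p + q.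
Proof.
move=> x0 p0 q0 xpq.
rewrite -(@ler_pXn2r _ 2) ?nnegrE ?addr_ge0 ?mulr_ge0 //.
have := sqr_ge0 (p - q); nra.
Qed.

Lemma witness_product_ineq (R : realFieldType) (a d b e x y : R) :
  0 <= a -> 0 <= d -> 0 <= b -> 0 <= e -> a + d <= 1 -> b + e <= 1 ->
  0 <= x -> x ^+ 2 <= a * d * (b * e) -> - x <= y ->
  0 <= 3 + 2 * (a * b + d * e) + 12 * y.
Proof.
move=> a0 d0 b0 e0 ad1 be1 x0 xx xy.
have le_abde : 2 * x <= a * b + d * e.
  by apply: le_AGM2; rewrite ?mulr_ge0 // mulrACA.
have le_aebd : 2 * x <= a * e + b * d.
  apply: le_AGM2; rewrite ?mulr_ge0 //.
  by rewrite (_ : a * e * (b * d) = a * d * (b * e)) //; ring.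
have : (a + d) * (b + e) <= 1 by rewrite -[1]mulr1 ler_pM ?addr_ge0.
lra.
Qed.

Lemma witness_product_ineq_algC (a d b e x y : algC) :
  0 <= a -> 0 <= d -> 0 <= b -> 0 <= e -> a + d <= 1 -> b + e <= 1 ->
  0 <= x -> x ^+ 2 <= a * d * (b * e) -> y \is Num.real -> - x <= y ->
  0 <= 3 + 2 * (a * b + d * e) + 12 * y.
Proof.
move=> a0 d0 b0 e0 ad1 be1 x0 xx yR xy.
(* lra needs a real field: move to the real algebraic numbers algR *)
have := @witness_product_ineq algR
  (in_algR (ger0_real a0)) (in_algR (ger0_real d0)) (in_algR (ger0_real b0))
  (in_algR (ger0_real e0)) (in_algR (ger0_real x0)) (in_algR yR).
by apply=> //; apply: val_inj.
Qed.

(* Copies of qubit, setq and rest on nat: unlike divn, modn and inord they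
   reduce under simpl, so that case analysis on the indices computes. *)
Definition qubit_nat (i k : nat) : nat := odd (iter (2 - k) half i).
Definition setq_nat (i k a : nat) : nat :=
  i - qubit_nat i k * 2 ^ (2 - k) + a * 2 ^ (2 - k).
Definition rest_nat (k i : nat) : nat :=
  match k with
  | 0 => 2 * qubit_nat i 1 + qubit_nat i 2
  | 1 => 2 * qubit_nat i 0 + qubit_nat i 2
  | _ => 2 * qubit_nat i 0 + qubit_nat i 1
  end.
Arguments qubit_nat i k /.
Arguments setq_nat i k a /.
Arguments rest_nat k i /.

Ltac ord8 i := case: i => [[|[|[|[|[|[|[|[|?]]]]]]]] ?] //.
Ltac ord3 i := case: i => [[|[|[|?]]] ?] //.
Ltac ord2 i := case: i => [[|[|?]] ?] //.

Lemma qubitE i k : qubit i k = qubit_nat i k :> nat.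
Proof.
rewrite /qubit inordK ?ltn_pmod // modn2 /=; congr (nat_of_bool (odd _)).
by elim: (2 - k)%N => [|m IHm]; rewrite ?divn1 // expnSr divnMA IHm divn2.
Qed.

Lemma setqE i k a : setq i k a = setq_nat i k a :> nat.
Proof. by rewrite /setq qubitE inordK //; ord8 i; ord3 k; ord2 a. Qed.

Lemma restE k i : rest k i = rest_nat k i :> nat.
Proof. by rewrite /rest !qubitE !inordK //; ord3 k; ord8 i. Qed.

Lemma qubit_ord0 k : qubit ord0 k = ord0.
Proof. by apply: ord_inj; rewrite qubitE /=; ord3 k. Qed.

Lemma qubit_ord_max k : qubit ord_max k = ord_max.
Proof. by apply: ord_inj; rewrite qubitE /=; ord3 k. Qed.

Lemma rest_ord0 k : rest k ord0 = ord0.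
Proof. by apply: ord_inj; rewrite restE /=; ord3 k. Qed.

Lemma rest_ord_max k : rest k ord_max = ord_max.
Proof. by apply: ord_inj; rewrite restE /=; ord3 k. Qed.

(* Reading entries through nat indices lets simpl identify the ordinals
   produced by big_ord_recl with those computed by qubit and rest. *)
Definition entry n (M : 'M[algC]_n.+1) (i j : nat) : algC :=
  M (inord i) (inord j).

Lemma entryE n (M : 'M[algC]_n.+1) i j : M i j = entry M i j.
Proof. by rewrite /entry !inord_val. Qed.

Lemma mxtrace_bip k A B : \tr (bip k A B) = \tr A * \tr B.
Proof.
rewrite /mxtrace !big_ord_recl !big_ord0 !mxE !entryE !qubitE !restE /=.
by ord3 k; ring.
Qed.

Lemma mxtrace_delta (R : comPzRingType) n (i j : 'I_n) :
  \tr (delta_mx i j : 'M[R]_n) = (i == j)%:R.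
Proof. by rewrite -[delta_mx i j]mulmx1 mxtrace_delta_mulmx mxE eq_sym. Qed.

Lemma ket_delta i : ket i = delta_mx i 0.
Proof. by apply/matrixP => r s; rewrite !mxE ord1 eqxx andbT; case: eqP. Qed.

Lemma proj_ket2 (a b : algC) i j :
  proj (a *: ket i + b *: ket j) =
    (a * a^*) *: delta_mx i i + (a * b^*) *: delta_mx i j +
    (b * a^*) *: delta_mx j i + (b * b^*) *: delta_mx j j.
Proof.
rewrite /proj !ket_delta adjD !adjZ !adj_delta !(mulmxDl, mulmxDr).
by rewrite -!(scalemxAl, scalemxAr) !mul_delta_mx !scalerA !addrA.
Qed.

Lemma inv_sqrtC2_mul_conj : (sqrtC 2)^-1 * ((sqrtC 2)^-1)^* = 2^-1 :> algC.
Proof.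
by rewrite geC0_conj ?invr_ge0 ?sqrtC_ge0 ?ler0n // -invfM -expr2 sqrtCK.
Qed.

Lemma inord7 : inord 7 = ord_max :> 'I_8.
Proof. by apply: ord_inj; rewrite inordK. Qed.

Lemma proj_GHZ : proj GHZ = 2^-1 *:
  (delta_mx ord0 ord0 + delta_mx ord0 ord_max + delta_mx ord_max ord0
   + delta_mx ord_max ord_max).
Proof.
by rewrite /GHZ scalerDr inord7 proj_ket2 inv_sqrtC2_mul_conj !scalerDr.
Qed.

Lemma proj_GHZt : proj GHZt = 2^-1 *:
  (delta_mx ord0 ord0 - delta_mx ord0 ord_max - delta_mx ord_max ord0
   + delta_mx ord_max ord_max).
Proof.
rewrite /GHZt scalerBr -scaleNr inord7 proj_ket2 rmorphN /=.
by rewrite mulrNN mulrN mulNr inv_sqrtC2_mul_conj !scalerDr !scaleNr !scalerN.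
Qed.

Lemma mxtrace_proj_GHZ : \tr (proj GHZ) = 1.
Proof. by rewrite proj_GHZ mxtraceZ !mxtraceD !mxtrace_delta /=; field. Qed.

Lemma WitE : Wit =
  3/4 *: 1%:M + 1/2 *: (delta_mx ord0 ord0 + delta_mx ord_max ord_max)
  + 3/2 *: (delta_mx ord0 ord_max + delta_mx ord_max ord0).
Proof.
apply/matrixP => i j.
rewrite /Wit /Phi3 mxtrace_proj_GHZ proj_GHZ /on_qubit /Pmap !mxE.
rewrite -!val_eqE /= !setqE !qubitE.
by ord8 i; ord8 j; rewrite /=; field.
Qed.

Lemma mxtrace_Wit_mul M : \tr (Wit *m M) =
  3/4 * \tr M + 1/2 * (M ord0 ord0 + M ord_max ord_max)
  + 3/2 * (M ord0 ord_max + M ord_max ord0).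
Proof.
rewrite WitE !mulmxDl -!scalemxAl !mulmxDl !(mxtraceD, mxtraceZ) mul1mx.
by rewrite !mxtrace_delta_mulmx [M ord_max ord0 + _]addrC.
Qed.

Lemma mxtrace_Wit_bip_ge0 k A B :
  density A -> density B -> 0 <= \tr (Wit *m bip k A B).
Proof.
move=> dA dB; have pA := density_psd dA; have pB := density_psd dB.
have [[_ [_ trA]] [_ [_ trB]]] := (dA, dB).
rewrite mxtrace_Wit_mul mxtrace_bip trA trB !mxE.
rewrite !qubit_ord0 !qubit_ord_max !rest_ord0 !rest_ord_max.
rewrite (psd_conj pA ord0 ord_max) (psd_conj pB ord0 ord_max) -rmorphM /=.
set a := A ord0 ord0; set d := A ord_max ord_max; set c := A ord0 ord_max.
set b := B ord0 ord0; set e := B ord_max ord_max; set f := B ord0 ord_max.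
have -> : c * f + (c * f)^* = 2 * 'Re (c * f) by rewrite ReE; field.
have ad1 : a + d <= 1 by rewrite -trA psd_diag2_le_mxtrace.
have be1 : b + e <= 1 by rewrite -trB psd_diag2_le_mxtrace.
have cf_bound : (`|c| * `|f|) ^+ 2 <= a * d * (b * e).
  by rewrite exprMn ler_pM ?exprn_ge0 ?psd_entry_bound.
have Re_ge : - (`|c| * `|f|) <= 'Re (c * f).
  by rewrite real_lerNnormlW ?Creal_Re // -normrM (leif_normC_Re_Creal _).1.
have := witness_product_ineq_algC (psd_diag_ge0 pA ord0)
  (psd_diag_ge0 pA ord_max) (psd_diag_ge0 pB ord0) (psd_diag_ge0 pB ord_max)
  ad1 be1 (mulr_ge0 (normr_ge0 c) (normr_ge0 f)) cf_bound (Creal_Re _) Re_ge.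
set S := a * b + d * e; set r := 'Re _ => witness_ge0.
have -> : 3/4 * (1 * 1) + 1/2 * S + 3/2 * (2 * r) = 4^-1 * (3 + 2 * S + 12 * r).
  by field.
by rewrite mulr_ge0 ?invr_ge0 ?ler0n.
Qed.

Lemma mxtrace_Wit_GHZt : \tr (Wit *m proj GHZt) = - (1 / 4).
Proof.
rewrite mxtrace_Wit_mul proj_GHZt mxtraceZ !(raddfD, raddfN) /=.
rewrite !mxtrace_delta !mxE.
by rewrite -!val_eqE /=; field.
Qed.

Theorem proposition2 :
  (forall rho : 'M[algC]_8, biseparable rho -> 0 <= \tr (Wit *m rho)) /\
  \tr (Wit *m proj GHZt) = - (1 / 4) /\
  ~ biseparable (proj GHZt).
Proof.
have witness rho : biseparable rho -> 0 <= \tr (Wit *m rho).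
  move=> [p [A [B [p_ge0 [_ [dA [dB ->]]]]]]].
  rewrite mulmx_sumr raddf_sum /=; apply: sumr_ge0 => k _.
  by rewrite -scalemxAr mxtraceZ mulr_ge0 ?mxtrace_Wit_bip_ge0.
split=> //; split=> [|/witness]; first exact: mxtrace_Wit_GHZt.
by rewrite mxtrace_Wit_GHZt oppr_ge0 lt_geF // divr_gt0 ?ltr0n.
Qed.
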